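(* Let $\mu\in\mathbb{R}^N$, $\nu\in\mathbb{R}^M$ be nonnegative vectors with $\sum_i\mu_i=\sum_j\nu_j$, let $c\in\mathbb{R}^{N\times M}$ and $\gamma>0$. Define the map $T:(\alpha,\beta)\mapsto(\alpha',\beta')$ on $\mathbb{R}^N\times\mathbb{R}^M$ by \[ \pi_{ij}=\tfrac1\gamma(\alpha_i+\beta_j-c_{ij})_+,\quad f_i=-\gamma\Bigl(\sum_j\pi_{ij}-\mu_i\Bigr),\quad g_j=-\gamma\Bigl(\sum_i\pi_{ij}-\nu_j\Bigr), \] \[ \alpha'_i=\alpha_i+\tfrac1M\Bigl(f_i-\tfrac{1}{2N}\textstyle\sum_{k}f_k\Bigr),\qquad \beta'_j=\beta_j+\tfrac1N\Bigl(g_j-\tfrac{1}{2M}\textstyle\sum_{l}g_l\Bigr). \] If $(\alpha,\beta)$ is a fixed point of $T$, then the matrix $\pi=(\alpha\oplus\beta-c)_+/\gamma$ is an optimal solution of \[ \min\Bigl\{\sum_{i,j}c_{ij}\pi_{ij}+\tfrac\gamma2\|\pi\|_2^2:\ \pi\in\mathbb{R}^{N\times M},\ \pi\ge0,\ \pi\mathbf 1=\mu,\ \pi^T\mathbf 1=\nu\Bigr\}. \]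
   Context: $(\alpha\oplus\beta)_{ij}:=\alpha_i+\beta_j$, $t_+=\max(t,0)$ applied entrywise, $\|\pi\|_2$ is the Frobenius norm, $\mathbf 1$ is the all-ones vector of appropriate size, and $\pi\ge 0$ is meant entrywise. *)

(* R is an arbitrary real field (the statement is purely
   algebraic/order-theoretic, so this generalizes the real numbers). *)
From HB Require Import structures.
From mathcomp Require Import all_boot all_order all_algebra.
Set Implicit Arguments. Unset Strict Implicit. Unset Printing Implicit Defensive.
Import Order.TTheory GRing.Theory Num.Theory.
Local Open Scope ring_scope.

Definition pospart {R : realFieldType} (t : R) : R := Num.max t 0.

Definition plan {R : realFieldType} {N M : nat} (gamma : R)
  (c : 'M[R]_(N, M)) (alpha : 'cV[R]_N) (beta : 'cV[R]_M) : 'M[R]_(N, M) :=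
  \matrix_(i < N, j < M) (pospart (alpha i 0 + beta j 0 - c i j) / gamma).

Definition Tmap {R : realFieldType} {N M : nat} (gamma : R)
  (mu : 'cV[R]_N) (nu : 'cV[R]_M) (c : 'M[R]_(N, M))
  (alpha : 'cV[R]_N) (beta : 'cV[R]_M) : 'cV[R]_N * 'cV[R]_M :=
  let pi := plan gamma c alpha beta in
  let f := fun i : 'I_N => - gamma * (\sum_(j < M) pi i j - mu i 0) in
  let g := fun j : 'I_M => - gamma * (\sum_(i < N) pi i j - nu j 0) in
  (\col_(i < N) (alpha i 0 + M%:R^-1 * (f i - (2 * N%:R)^-1 * \sum_(k < N) f k)),
   \col_(j < M) (beta j 0 + N%:R^-1 * (g j - (2 * M%:R)^-1 * \sum_(l < M) g l))).

Definition ot_obj {R : realFieldType} {N M : nat} (gamma : R)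
  (c : 'M[R]_(N, M)) (pi : 'M[R]_(N, M)) : R :=
  \sum_(i < N) \sum_(j < M) c i j * pi i j
  + gamma / 2 * \sum_(i < N) \sum_(j < M) pi i j ^+ 2.

Definition feasible {R : realFieldType} {N M : nat}
  (mu : 'cV[R]_N) (nu : 'cV[R]_M) (pi : 'M[R]_(N, M)) : Prop :=
  (forall i j, 0 <= pi i j) /\
  pi *m const_mx 1 = mu /\ pi^T *m const_mx 1 = nu.

(* A fixed point of T makes every residual f_i, g_j vanish (each step is the
   residual minus half its mean, which is zero only for the zero vector), so
   pi has the prescribed marginals.  Optimality is then the KKT argument with
   dual potentials alpha, beta: entrywise, pi_ij = (alpha_i + beta_j - c_ij)_+ / gamma
   minimises  c_ij q + gamma/2 q^2 - (alpha_i + beta_j) q  over q >= 0, and for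
   plans with the same marginals the pairing with alpha_i + beta_j is the same. *)
From HB Require Import structures.
From mathcomp Require Import all_boot all_order all_algebra.
From mathcomp Require Import ring lra.
Import Order.TTheory GRing.Theory Num.Theory.
Local Open Scope ring_scope.

Lemma pospart_ge0 (R : realFieldType) (t : R) : 0 <= pospart t.
Proof. by rewrite /pospart le_max lexx orbT. Qed.

Lemma pospart_div_min (R : realFieldType) (g s c q : R) :
  0 < g -> 0 <= q ->
  c * (pospart (s - c) / g) + g / 2 * (pospart (s - c) / g) ^+ 2
    - s * (pospart (s - c) / g)
  <= c * q + g / 2 * q ^+ 2 - s * q.
Proof.
move=> g_gt0 q_ge0; rewrite /pospart /Order.max.
case: ifP => [s_lt_c | /negbT]; first by rewrite mul0r; nra.
rewrite -leNgt => c_le_s.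
set p := (s - c) / g.
have -> : s = c + g * p by rewrite /p mulrC divfK ?gt_eqF //; lra.
have := mulr_ge0 (ltW g_gt0) (sqr_ge0 (q - p)); nra.
Qed.

Lemma eq0_of_sub_half_mean (R : realFieldType) n (F : 'I_n -> R) :
  (forall i, F i = (2 * n%:R)^-1 * \sum_(k < n) F k) -> forall i, F i = 0.
Proof.
move=> F_mean i.
have n_neq0 : n%:R != 0 :> R by rewrite pnatr_eq0 -lt0n (leq_ltn_trans _ (ltn_ord i)).
have sum_eq : \sum_(k < n) F k = (\sum_(k < n) F k) / 2.
  rewrite [LHS](eq_bigr _ (fun k _ => F_mean k)) sumr_const card_ord.
  by rewrite -mulr_natr; field.
have sum0 : \sum_(k < n) F k = 0 by lra.
by rewrite F_mean sum0 mulr0.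
Qed.

Lemma fixed_step_eq0 (R : realFieldType) n m (x : 'cV[R]_n) (F : 'I_n -> R) :
  (0 < m)%N ->
  \col_(i < n) (x i 0 + m%:R^-1 * (F i - (2 * n%:R)^-1 * \sum_(k < n) F k)) = x ->
  forall i, F i = 0.
Proof.
move=> m_gt0 fixed; apply: eq0_of_sub_half_mean => i.
have := congr1 (fun y : 'cV[R]_n => y i 0) fixed.
rewrite mxE -[RHS]addr0 => /addrI /eqP.
by rewrite mulf_eq0 invr_eq0 pnatr_eq0 (gtn_eqF m_gt0) /= subr_eq0 => /eqP.
Qed.

Lemma mulmx_const1E (R : realFieldType) N M (pi : 'M[R]_(N, M)) i :
  (pi *m (const_mx 1 : 'cV[R]_M)) i 0 = \sum_(j < M) pi i j.
Proof. by rewrite mxE; apply: eq_bigr => j _; rewrite mxE mulr1. Qed.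

Lemma feasibleE (R : realFieldType) N M (mu : 'cV[R]_N) (nu : 'cV[R]_M)
    (pi : 'M[R]_(N, M)) :
  feasible mu nu pi <->
  [/\ forall i j, 0 <= pi i j,
      forall i, \sum_(j < M) pi i j = mu i 0
    & forall j, \sum_(i < N) pi i j = nu j 0].
Proof.
split=> [[pi_ge0 [rows cols]] | [pi_ge0 rows cols]].
- split=> // [i | j]; first by rewrite -mulmx_const1E rows.
  by rewrite -cols mulmx_const1E; apply: eq_bigr => i _; rewrite mxE.
- split=> //; split; apply/matrixP => k l; rewrite (ord1 l) mulmx_const1E //.
  by rewrite -cols; apply: eq_bigr => i _; rewrite mxE.
Qed.

Lemma sum_potential_eq (R : realFieldType) N M (a : 'I_N -> R) (b : 'I_M -> R)
    (p q : 'M[R]_(N, M)) :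
  (forall i, \sum_(j < M) p i j = \sum_(j < M) q i j) ->
  (forall j, \sum_(i < N) p i j = \sum_(i < N) q i j) ->
  \sum_(i < N) \sum_(j < M) (a i + b j) * p i j
    = \sum_(i < N) \sum_(j < M) (a i + b j) * q i j.
Proof.
have splitE (x : 'M[R]_(N, M)) :
    \sum_(i < N) \sum_(j < M) (a i + b j) * x i j
    = \sum_(i < N) a i * \sum_(j < M) x i j
      + \sum_(j < M) b j * \sum_(i < N) x i j.
  under eq_bigr do under eq_bigr do rewrite mulrDl.
  under eq_bigr do rewrite big_split /=.
  rewrite big_split /=; congr (_ + _).
  - by apply: eq_bigr => i _; rewrite mulr_sumr.
  - by rewrite exchange_big; apply: eq_bigr => j _; rewrite mulr_sumr.
move=> rows cols; rewrite !splitE.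
by congr (_ + _); apply: eq_bigr => k _; rewrite ?rows ?cols.
Qed.

Lemma ot_obj_subE (R : realFieldType) N M (gamma : R) (c pi : 'M[R]_(N, M))
    (s : 'I_N -> 'I_M -> R) :
  ot_obj gamma c pi - \sum_(i < N) \sum_(j < M) s i j * pi i j
  = \sum_(i < N) \sum_(j < M)
      (c i j * pi i j + gamma / 2 * pi i j ^+ 2 - s i j * pi i j).
Proof.
rewrite /ot_obj mulr_sumr -big_split -sumrB; apply: eq_bigr => i _.
by rewrite mulr_sumr -big_split -sumrB.
Qed.

Section FixedPoint.

Variables (R : realFieldType) (N M : nat).
Variables (mu : 'cV[R]_N) (nu : 'cV[R]_M) (c : 'M[R]_(N, M)) (gamma : R).
Variables (alpha : 'cV[R]_N) (beta : 'cV[R]_M).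
Hypothesis mu_ge0 : forall i, 0 <= mu i 0.
Hypothesis nu_ge0 : forall j, 0 <= nu j 0.
Hypothesis mass_balance : \sum_(i < N) mu i 0 = \sum_(j < M) nu j 0.
Hypothesis gamma_gt0 : 0 < gamma.
Hypothesis fixed : Tmap gamma mu nu c alpha beta = (alpha, beta).

Let p := plan gamma c alpha beta.

Lemma plan_ge0 i j : 0 <= p i j.
Proof. by rewrite mxE divr_ge0 ?pospart_ge0 ?ltW. Qed.

Lemma residual_eq0 (s m : R) : - gamma * (s - m) = 0 -> s = m.
Proof. by move/eqP; rewrite mulf_eq0 oppr_eq0 gt_eqF // subr_eq0 => /eqP. Qed.

(* With M = 0 the row sums are empty, and mass balance forces mu = 0. *)
Lemma fixed_row_sum i : \sum_(j < M) p i j = mu i 0.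
Proof.
have [M0 | M_gt0] := posnP M.
  have noj (j : 'I_M) : False by case: j => j; rewrite M0.
  have mass0 : \sum_(k < N) mu k 0 = 0.
    by rewrite mass_balance big1 // => j; case: (noj j).
  rewrite big1 => [|j]; last by case: (noj j).
  by symmetry; apply: (psumr_eq0P _ mass0).
apply: residual_eq0; move: i; apply: fixed_step_eq0 M_gt0 _.
by case: fixed => fixed_alpha _; exact: fixed_alpha.
Qed.

Lemma fixed_col_sum j : \sum_(i < N) p i j = nu j 0.
Proof.
have [N0 | N_gt0] := posnP N.
  have noi (i : 'I_N) : False by case: i => i; rewrite N0.
  have mass0 : \sum_(k < M) nu k 0 = 0.
    by rewrite -mass_balance big1 // => i; case: (noi i).
  rewrite big1 => [|i]; last by case: (noi i).
  by symmetry; apply: (psumr_eq0P _ mass0).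
apply: residual_eq0; move: j; apply: fixed_step_eq0 N_gt0 _.
by case: fixed => _ fixed_beta; exact: fixed_beta.
Qed.

Lemma fixed_plan_feasible : feasible mu nu p.
Proof.
by apply/feasibleE; split;
  [exact: plan_ge0 | exact: fixed_row_sum | exact: fixed_col_sum].
Qed.

Lemma fixed_plan_optimal q : feasible mu nu q -> ot_obj gamma c p <= ot_obj gamma c q.
Proof.
move=> /feasibleE[q_ge0 q_rows q_cols].
pose s i j := alpha i 0 + beta j 0.
have lagrangian_le : ot_obj gamma c p - \sum_(i < N) \sum_(j < M) s i j * p i j
                     <= ot_obj gamma c q - \sum_(i < N) \sum_(j < M) s i j * q i j.
  rewrite !ot_obj_subE; apply: ler_sum => i _; apply: ler_sum => j _.
  by rewrite /p /s mxE pospart_div_min.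
have pairing_eq : \sum_(i < N) \sum_(j < M) s i j * p i j
                  = \sum_(i < N) \sum_(j < M) s i j * q i j.
  apply: sum_potential_eq => [i | j].
  - by rewrite fixed_row_sum q_rows.
  - by rewrite fixed_col_sum q_cols.
by rewrite pairing_eq lerD2r in lagrangian_le.
Qed.

End FixedPoint.

Theorem mainTheorem9 (R : realFieldType) (N M : nat)
  (mu : 'cV[R]_N) (nu : 'cV[R]_M) (c : 'M[R]_(N, M)) (gamma : R)
  (alpha : 'cV[R]_N) (beta : 'cV[R]_M) :
  (forall i, 0 <= mu i 0) -> (forall j, 0 <= nu j 0) ->
  \sum_(i < N) mu i 0 = \sum_(j < M) nu j 0 ->
  0 < gamma ->
  Tmap gamma mu nu c alpha beta = (alpha, beta) ->
  feasible mu nu (plan gamma c alpha beta) /\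
  (forall pi : 'M[R]_(N, M), feasible mu nu pi ->
     ot_obj gamma c (plan gamma c alpha beta) <= ot_obj gamma c pi).
Proof.
move=> mu_ge0 nu_ge0 mass_balance gamma_gt0 fixed; split.
- exact: fixed_plan_feasible.
- exact: fixed_plan_optimal.
Qed.
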